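(* Let $\delta\in(0,\frac14]$ and let $h:[0,\delta]\to\mathbb{R}$ be continuous with $h(0)=0$ and $h(\delta)=1$. Then there exist $\bar r\in(0,\delta)$ and a smooth function $l:[0,\delta]\to\mathbb{R}$ such that $h-l$ attains a local minimum at $\bar r$ and $$l'(\bar r)\geq\frac{1}{4\delta}\qquad\text{and}\qquad \frac{l''(\bar r)}{1+(l'(\bar r))^2}\geq -2\,l'(\bar r).$$ *)

From Stdlib Require Import Reals.
From Coquelicot Require Import Coquelicot.
Open Scope R_scope.

Definition smooth (f : R -> R) : Prop :=
  forall (n : nat) (x : R), ex_derive_n f n x.

Definition continuous_on_Icc (f : R -> R) (a b : R) : Prop :=
  forall x, a <= x <= b ->
    filterlim f (within (fun y => a <= y <= b) (locally x)) (locally (f x)).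

Definition local_min_on_Icc (g : R -> R) (a b r : R) : Prop :=
  exists eps : R, 0 < eps /\
    forall x, a <= x <= b -> Rabs (x - r) < eps -> g r <= g x.

From Stdlib Require Import Reals Lra Psatz Classical.
From Coquelicot Require Import Coquelicot.
Open Scope R_scope.

(* Let k = 3 / (4 sqrt delta).  By continuity h < 1/4 on some [0, tau].  On [0, tau] the function h
   cannot gain at least k sqrt (x - t) across every subinterval [t, x]: chaining n equal steps would
   give h tau - h 0 >= k sqrt (n tau) for all n.  So some t < x in [0, tau] has
   h x < h t + k sqrt (x - t).  Then y |-> h y - k sqrt (y - t) is smaller at x than at t and at delta
   (where k sqrt (delta - t) <= 3/4), so it attains its minimum over [t, delta] at an interior r.
   A parabola l lying below k sqrt (. - t) near r and touching it at r turns this into a local minimum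
   of h - l; with s = sqrt (r - t), l'(r) = k / (2 s) and l''(r) = -4 k / (9 s^3), and the two
   inequalities reduce to s <= sqrt delta and k >= 4/3. *)

Lemma Derive_n_derive_chain (f : nat -> R -> R) :
  (forall n x, is_derive (f n) x (f (S n) x)) ->
  forall n x, Derive_n (f O) n x = f n x.
Proof.
  intros Hf n. induction n as [|n IH]; intro x; [reflexivity|].
  simpl. rewrite (Derive_ext _ _ x IH). apply is_derive_unique, Hf.
Qed.

Lemma smooth_derive_chain (f : nat -> R -> R) :
  (forall n x, is_derive (f n) x (f (S n) x)) -> smooth (f O).
Proof.
  intros Hf [|n] x; [exact I|]. simpl.
  apply (ex_derive_ext (f n)).
  - intro y. symmetry. apply Derive_n_derive_chain, Hf.
  - exists (f (S n) x). apply Hf.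
Qed.

Definition parabola (c0 c1 c2 r x : R) : R := c0 + c1 * (x - r) + c2 * (x - r) ^ 2.

Definition parabola_derive_n (c0 c1 c2 r : R) (n : nat) (x : R) : R :=
  match n with
  | O => parabola c0 c1 c2 r x
  | 1 => c1 + 2 * c2 * (x - r)
  | 2 => 2 * c2
  | _ => 0
  end.

Lemma is_derive_parabola_derive_n (c0 c1 c2 r : R) (n : nat) (x : R) :
  is_derive (parabola_derive_n c0 c1 c2 r n) x (parabola_derive_n c0 c1 c2 r (S n) x).
Proof.
  destruct n as [|[|[|n]]]; unfold parabola_derive_n, parabola; auto_derive; auto; ring.
Qed.

Lemma smooth_parabola (c0 c1 c2 r : R) : smooth (parabola c0 c1 c2 r).
Proof. exact (smooth_derive_chain _ (is_derive_parabola_derive_n c0 c1 c2 r)). Qed.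

Lemma Derive_parabola (c0 c1 c2 r : R) : Derive (parabola c0 c1 c2 r) r = c1.
Proof.
  change (Derive_n (parabola_derive_n c0 c1 c2 r 0) 1 r = c1).
  rewrite Derive_n_derive_chain by apply is_derive_parabola_derive_n.
  simpl. ring.
Qed.

Lemma Derive_n_parabola_2 (c0 c1 c2 r x : R) :
  Derive_n (parabola c0 c1 c2 r) 2 x = 2 * c2.
Proof.
  exact (Derive_n_derive_chain _ (is_derive_parabola_derive_n c0 c1 c2 r) 2 x).
Qed.

Lemma sqrt_ge_parabola (u v : R) : 0 < u -> u / 4 < v ->
  sqrt u + (v - u) / (2 * sqrt u) - 2/9 * (v - u) ^ 2 / sqrt u ^ 3 <= sqrt v.
Proof.
  intros Hu Hv.
  assert (Hs : 0 < sqrt u) by (apply sqrt_lt_R0; lra).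
  assert (Hu2 := sqrt_sqrt u ltac:(lra)).
  assert (Hv2 := sqrt_sqrt v ltac:(lra)).
  assert (Ha := sqrt_pos v).
  set (s := sqrt u) in *. set (a := sqrt v) in *.
  assert (Hsa : s <= 2 * a) by nra.
  rewrite <- Hu2, <- Hv2.
  (* the gap is (a - s)^2 (2/9 (a + s)^2 - s^2/2) / s^3, and a + s >= 3 s / 2 *)
  assert (Hgap : 0 <= (a - s) ^ 2 * (2/9 * (a + s) ^ 2 - s ^ 2 / 2) / s ^ 3).
  { apply Rmult_le_pos; [apply Rmult_le_pos; [apply pow2_ge_0 | nra] |].
    apply Rlt_le, Rinv_0_lt_compat, pow_lt, Hs. }
  assert (E : a - (s + (a * a - s * s) / (2 * s) - 2/9 * (a * a - s * s) ^ 2 / s ^ 3)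
              = (a - s) ^ 2 * (2/9 * (a + s) ^ 2 - s ^ 2 / 2) / s ^ 3) by (field; lra).
  lra.
Qed.

Definition clamp (a b x : R) : R := Rmax a (Rmin b x).

Lemma clamp_in (a b x : R) : a <= b -> a <= clamp a b x <= b.
Proof. intros. unfold clamp, Rmax, Rmin. repeat destruct Rle_dec; lra. Qed.

Lemma clamp_id (a b x : R) : a <= x <= b -> clamp a b x = x.
Proof. intros. unfold clamp, Rmax, Rmin. repeat destruct Rle_dec; lra. Qed.

Lemma clamp_dist_le (a b x c : R) : a <= c <= b ->
  Rabs (clamp a b x - c) <= Rabs (x - c).
Proof.
  intros. unfold clamp, Rmax, Rmin, Rabs.
  repeat (destruct Rle_dec || destruct Rcase_abs); lra.
Qed.

Lemma filterlim_clamp (a b c : R) : a <= c <= b ->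
  filterlim (clamp a b) (locally c) (within (fun y => a <= y <= b) (locally c)).
Proof.
  intros Hc P [eps HP]. exists eps. intros x Hx.
  apply HP; [| apply clamp_in; lra].
  apply (Rle_lt_trans _ (Rabs (x - c))); [apply clamp_dist_le, Hc | exact Hx].
Qed.

Lemma continuous_on_Icc_min (g : R -> R) (a b : R) : a <= b ->
  continuous_on_Icc g a b ->
  exists r, a <= r <= b /\ forall y, a <= y <= b -> g r <= g y.
Proof.
  intros Hab Hg.
  (* composing with clamp gives the two-sided continuity that continuity_ab_min requires *)
  destruct (continuity_ab_min (fun x => g (clamp a b x)) a b Hab) as [r [Hmin Hr]].
  { intros c Hc. apply continuity_pt_filterlim.
    rewrite (clamp_id a b c Hc).
    exact (filterlim_comp _ _ _ _ _ _ _ _ (filterlim_clamp a b c Hc) (Hg c Hc)). }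
  exists r. split; [exact Hr|]. intros y Hy.
  specialize (Hmin y Hy). rewrite !clamp_id in Hmin by lra. exact Hmin.
Qed.

Lemma continuous_on_Icc_interior_min (g : R -> R) (a b x : R) :
  continuous_on_Icc g a b -> a <= x <= b -> g x < g a -> g x < g b ->
  exists r, a < r < b /\ forall y, a <= y <= b -> g r <= g y.
Proof.
  intros Hg Hx Ha Hb.
  destruct (continuous_on_Icc_min g a b ltac:(lra) Hg) as [r [Hr Hmin]].
  exists r. split; [|exact Hmin].
  assert (Hrx := Hmin x Hx).
  split; apply Rnot_ge_lt; intro E.
  - replace r with a in Hrx by lra. lra.
  - replace r with b in Hrx by lra. lra.
Qed.

Lemma continuous_on_Icc_sub (g : R -> R) (a b c d : R) : a <= c -> d <= b ->
  continuous_on_Icc g a b -> continuous_on_Icc g c d.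
Proof.
  intros Hac Hdb Hg x Hx.
  apply (filterlim_filter_le_1 _ (F := within (fun y => a <= y <= b) (locally x))).
  - intros P [eps HP]. exists eps. intros y Hy Hcd. apply HP; [exact Hy | lra].
  - apply Hg. lra.
Qed.

Lemma continuous_on_Icc_minus (g f : R -> R) (a b : R) :
  continuous_on_Icc g a b -> (forall x, continuous f x) ->
  continuous_on_Icc (fun x => g x - f x) a b.
Proof.
  intros Hg Hf x Hx.
  apply (filterlim_comp_2 (H := locally (opp (f x))) g (fun y => opp (f y)) plus (Hg x Hx)).
  - apply (filterlim_filter_le_1 _ (filter_le_within (F := locally x) _)).
    exact (filterlim_comp _ _ _ _ _ _ _ _ (Hf x) (filterlim_opp _)).
  - exact (filterlim_plus (g x) (opp (f x))).
Qed.

Lemma continuous_on_Icc_lt_near_left (g : R -> R) (a b m : R) : a < b ->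
  continuous_on_Icc g a b -> g a < m ->
  exists c, a < c < b /\ forall y, a <= y <= c -> g y < m.
Proof.
  intros Hab Hg Hm.
  assert (Hm' : 0 < m - g a) by lra.
  destruct (proj1 (filterlim_locally _ _) (Hg a (conj (Rle_refl a) (Rlt_le _ _ Hab)))
              (mkposreal _ Hm')) as [eps Heps].
  set (c := Rmin (a + eps / 2) ((a + b) / 2)).
  assert (Heps0 := cond_pos eps).
  assert (Hc : a < c) by (apply Rmin_glb_lt; lra).
  assert (Hc1 : c <= a + eps / 2) by apply Rmin_l.
  assert (Hc2 : c <= (a + b) / 2) by apply Rmin_r.
  exists c. split; [lra|]. intros y Hy.
  assert (Hball : ball (g a) (m - g a) (g y)).
  { apply Heps; [| lra]. change (Rabs (y - a) < eps). rewrite Rabs_right; lra. }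
  change (Rabs (g y - g a) < m - g a) in Hball.
  apply Rabs_def2 in Hball. lra.
Qed.

Lemma sqrt_growth_chain (g : R -> R) (a b k : R) :
  (forall t x, a <= t /\ t < x <= b -> g t + k * sqrt (x - t) <= g x) ->
  forall n d, 0 < d -> a + INR n * d <= b ->
  g a + INR n * (k * sqrt d) <= g (a + INR n * d).
Proof.
  intros Hgrow n. induction n as [|n IH]; intros d Hd Hn.
  - simpl. rewrite !Rmult_0_l, !Rplus_0_r. lra.
  - rewrite S_INR in *. assert (Hn0 := pos_INR n).
    specialize (IH d Hd ltac:(nra)).
    assert (Hstep := Hgrow (a + INR n * d) (a + (INR n + 1) * d) ltac:(nra)).
    replace (a + (INR n + 1) * d - (a + INR n * d)) with d in Hstep by ring.
    replace ((INR n + 1) * (k * sqrt d)) with (INR n * (k * sqrt d) + k * sqrt d) by ring.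
    lra.
Qed.

Lemma exists_small_sqrt_increment (g : R -> R) (a b k : R) : a < b -> 0 < k ->
  exists t x, a <= t /\ t < x <= b /\ g x < g t + k * sqrt (x - t).
Proof.
  intros Hab Hk. apply NNPP. intro Hno.
  assert (Hgrow : forall t x, a <= t /\ t < x <= b -> g t + k * sqrt (x - t) <= g x).
  { intros t x Htx. apply Rnot_lt_le. intro Hlt. apply Hno. exists t, x. tauto. }
  set (M := (g b - g a) / k).
  destruct (INR_archimed (b - a) (M * M) ltac:(lra)) as [n Hn].
  assert (Hn0 : 0 < INR n).
  { destruct n; [simpl in Hn; nra | apply lt_0_INR; lia]. }
  set (d := (b - a) / INR n).
  assert (Hnd : INR n * d = b - a) by (unfold d; field; lra).
  assert (Hd : 0 < d) by (unfold d; apply Rdiv_lt_0_compat; lra).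
  assert (Hchain := sqrt_growth_chain g a b k Hgrow n d Hd ltac:(lra)).
  replace (a + INR n * d) with b in Hchain by lra.
  (* n sqrt d = sqrt (n (b - a)) exceeds M, as n (b - a) > M^2 *)
  assert (Hsq := sqrt_sqrt d (Rlt_le _ _ Hd)).
  assert (Hs := sqrt_pos d).
  assert (E : (INR n * sqrt d) * (INR n * sqrt d) = INR n * (b - a)).
  { transitivity (INR n * INR n * (sqrt d * sqrt d)); [ring | rewrite Hsq, <- Hnd; ring]. }
  assert (HM : M < INR n * sqrt d).
  { apply Rnot_le_lt. intro Hle.
    assert (0 <= INR n * sqrt d) by (apply Rmult_le_pos; lra). nra. }
  assert (Hkm : k * M = g b - g a) by (unfold M; field; lra).
  nra.
Qed.

Lemma exists_interior_min_sub_sqrt (h : R -> R) (a b k t x : R) :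
  continuous_on_Icc h a b -> a <= t -> t < x <= b ->
  h x < h t + k * sqrt (x - t) -> h t < h b - k * sqrt (b - t) ->
  exists r, t < r < b /\ forall y, t <= y <= b ->
    h r - k * sqrt (r - t) <= h y - k * sqrt (y - t).
Proof.
  intros Hh Hat Hx Hxt Htb.
  apply (continuous_on_Icc_interior_min (fun y => h y - k * sqrt (y - t)) t b x).
  - apply continuous_on_Icc_minus; [apply (continuous_on_Icc_sub h a b); [lra | lra | exact Hh] |].
    intro y. exact (continuous_mult (fun _ => k) (fun z => sqrt (z - t)) y
      (continuous_const k y) (continuous_sqrt_comp _ y
        (continuous_minus _ _ y (continuous_id y) (continuous_const t y)))).
  - lra.
  - cbv beta. rewrite Rminus_diag, sqrt_0. lra.
  - cbv beta. lra.
Qed.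

(* The quadratic coefficient -2k/(9 s^3) lies below the Taylor coefficient -k/(8 s^3) of
   k sqrt (. - t) at r, which keeps the parabola under the square root on all of y - t > (r - t)/4. *)
Definition sqrt_parabola (k t r : R) : R -> R :=
  parabola (k * sqrt (r - t)) (k / (2 * sqrt (r - t))) (- (2/9) * k / sqrt (r - t) ^ 3) r.

Lemma sqrt_parabola_at (k t r : R) : sqrt_parabola k t r r = k * sqrt (r - t).
Proof. unfold sqrt_parabola, parabola. rewrite Rminus_diag. ring. Qed.

Lemma sqrt_parabola_le (k t r y : R) : 0 <= k -> t < r ->
  Rabs (y - r) < 3/4 * (r - t) -> sqrt_parabola k t r y <= k * sqrt (y - t).
Proof.
  intros Hk Htr Hy. apply Rabs_def2 in Hy.
  assert (Hs : 0 < sqrt (r - t)) by (apply sqrt_lt_R0; lra).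
  assert (Hle := sqrt_ge_parabola (r - t) (y - t) ltac:(lra) ltac:(lra)).
  replace (y - t - (r - t)) with (y - r) in Hle by ring.
  apply (Rmult_le_compat_l k) in Hle; [| exact Hk].
  unfold sqrt_parabola, parabola.
  replace (k * sqrt (r - t) + k / (2 * sqrt (r - t)) * (y - r)
           + - (2/9) * k / sqrt (r - t) ^ 3 * (y - r) ^ 2)
    with (k * (sqrt (r - t) + (y - r) / (2 * sqrt (r - t))
               - 2/9 * (y - r) ^ 2 / sqrt (r - t) ^ 3)) by (field; lra).
  exact Hle.
Qed.

Lemma Derive_sqrt_parabola_ge (k t r delta : R) : t < r -> r - t <= delta ->
  1/2 <= k * sqrt delta -> Derive (sqrt_parabola k t r) r >= 1 / (4 * delta).
Proof.
  intros Htr Hrd Hk. unfold sqrt_parabola. rewrite Derive_parabola.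
  assert (Hs : 0 < sqrt (r - t)) by (apply sqrt_lt_R0; lra).
  assert (Hsd : sqrt (r - t) <= sqrt delta) by (apply sqrt_le_1_alt; lra).
  assert (Hd2 : sqrt delta * sqrt delta = delta) by (apply sqrt_sqrt; lra).
  set (s := sqrt (r - t)) in *. set (sd := sqrt delta) in *.
  apply Rle_ge.
  replace (k / (2 * s)) with (k * sd / (2 * s * sd)) by (field; lra).
  rewrite <- Hd2.
  apply (Rle_trans _ (1/2 / (2 * sd * sd))).
  - apply Req_le. field. lra.
  - apply Rmult_le_compat; try lra.
    + apply Rlt_le, Rinv_0_lt_compat. nra.
    + apply Rinv_le_contravar; nra.
Qed.

Lemma sqrt_parabola_curvature_ge (k t r : R) : t < r -> 4/3 <= k ->
  Derive_n (sqrt_parabola k t r) 2 r / (1 + (Derive (sqrt_parabola k t r) r) ^ 2)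
  >= - 2 * Derive (sqrt_parabola k t r) r.
Proof.
  intros Htr Hk. unfold sqrt_parabola. rewrite Derive_parabola, Derive_n_parabola_2.
  assert (Hs : 0 < sqrt (r - t)) by (apply sqrt_lt_R0; lra).
  set (s := sqrt (r - t)) in *. set (p := k / (2 * s)).
  assert (Hp : 0 < 1 + p ^ 2) by (assert (0 <= p ^ 2) by apply pow2_ge_0; lra).
  (* clearing the denominator 1 + p^2 leaves k / s^3 * (s^2 + k^2/4 - 4/9) >= 0 *)
  assert (E : 2 * (- (2/9) * k / s ^ 3) / (1 + p ^ 2) + 2 * p
              = (2 * (- (2/9) * k / s ^ 3) + 2 * p * (1 + p ^ 2)) / (1 + p ^ 2))
    by (field; lra).
  replace (2 * (- (2/9) * k / s ^ 3) + 2 * p * (1 + p ^ 2))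
    with (k / s ^ 3 * (s * s + k * k / 4 - 4/9)) in E by (unfold p; field; lra).
  assert (0 <= k / s ^ 3 * (s * s + k * k / 4 - 4/9) / (1 + p ^ 2)).
  { apply Rmult_le_pos; [apply Rmult_le_pos |].
    - apply Rmult_le_pos; [lra | apply Rlt_le, Rinv_0_lt_compat, pow_lt, Hs].
    - nra.
    - apply Rlt_le, Rinv_0_lt_compat, Hp. }
  lra.
Qed.

Theorem lemma2p5 (delta : R) (h : R -> R) :
  0 < delta -> delta <= 1/4 ->
  continuous_on_Icc h 0 delta -> h 0 = 0 -> h delta = 1 ->
  exists (rbar : R) (l : R -> R),
    0 < rbar < delta /\
    smooth l /\
    local_min_on_Icc (fun x => h x - l x) 0 delta rbar /\
    Derive l rbar >= 1 / (4 * delta) /\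
    Derive_n l 2 rbar / (1 + (Derive l rbar)^2) >= - 2 * Derive l rbar.
Proof.
  intros Hd Hd4 Hc H0 H1.
  assert (Hd2 : sqrt delta * sqrt delta = delta) by (apply sqrt_sqrt; lra).
  assert (Hsd : 0 < sqrt delta <= 1/2) by (split; [apply sqrt_lt_R0 |]; nra).
  set (k := 3 / (4 * sqrt delta)).
  assert (Hk : k * sqrt delta = 3/4) by (unfold k; field; lra).
  destruct (continuous_on_Icc_lt_near_left h 0 delta (1/4)) as [tau [Htau Hsmall]];
    [lra | exact Hc | lra |].
  destruct (exists_small_sqrt_increment h 0 tau k) as [t [x [Htx Hx]]]; [lra | nra |].
  assert (Ht := Hsmall t ltac:(lra)).
  assert (Hdt : k * sqrt (delta - t) <= 3/4).
  { rewrite <- Hk. apply Rmult_le_compat_l; [nra | apply sqrt_le_1_alt; lra]. }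
  destruct (exists_interior_min_sub_sqrt h 0 delta k t x) as [r [Hr Hmin]];
    [exact Hc | lra | lra | lra | lra |].
  exists r, (sqrt_parabola k t r).
  split; [lra |]. split; [apply smooth_parabola |]. split.
  - exists (3/4 * (r - t)). split; [lra |]. intros y Hy Hyr.
    assert (Hty : t <= y) by (apply Rabs_def2 in Hyr; lra).
    assert (Hmy := Hmin y ltac:(lra)).
    assert (Hly := sqrt_parabola_le k t r y ltac:(nra) ltac:(lra) Hyr).
    rewrite sqrt_parabola_at. lra.
  - split.
    + apply Derive_sqrt_parabola_ge; lra.
    + apply sqrt_parabola_curvature_ge; nra.
Qed.
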